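(* Let $d\ge2$, let $N^+=\frac{(d-1)\sqrt{d+1}-1}{d}$, and let $\{Q_j\}_{j=1}^{d^2}$ be an NQPR in dimension $d$. Then the number of density operators $\rho$ on $\mathbb{C}^d$ with $N(\rho)=N^+$ is at most $d^2$, and equals $d^2$ if and only if there is a SIC $\{\Pi_j\}_{j=1}^{d^2}$ such that $Q_j=Q_j^+$ for all $j$.
   Context: An NQPR in dimension $d$ is a family $\{Q_j\}_{j=1}^{d^2}$ of Hermitian operators on $\mathbb{C}^d$ with $\operatorname{tr}(Q_j)=1$ and $\operatorname{tr}(Q_jQ_k)=d\,\delta_{jk}$. The negativity of a density operator $\rho$ with respect to $\{Q_j\}$ is $N(\rho)=\max\{0,-\min_j\operatorname{tr}(\rho Q_j)\}$. A SIC in dimension $d$ is a set $\{\Pi_j\}_{j=1}^{d^2}$ of rank-one projectors with $\operatorname{tr}(\Pi_j\Pi_k)=(d\delta_{jk}+1)/(d+1)$; given a SIC, $Q_j^+=-\sqrt{d+1}\,\Pi_j+\frac{1}{d}(1+\sqrt{d+1})$, with $1$ the identity in the operator term. *)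

From mathcomp Require Import all_boot all_order all_algebra.
From mathcomp Require Import reals complex.
Set Implicit Arguments. Unset Strict Implicit. Unset Printing Implicit Defensive.
Import Order.TTheory GRing.Theory Num.Theory.
Local Open Scope ring_scope.
Local Open Scope complex_scope.

Section QDefs.
Variable R : realType.
Local Notation C := R[i].

Definition adj (m n : nat) (A : 'M[C]_(m, n)) : 'M[C]_(n, m) := (map_mx conjc A)^T.

Definition hermitian (d : nat) (A : 'M[C]_d) : Prop := adj A = A.

Definition psd (d : nat) (A : 'M[C]_d) : Prop :=
  forall v : 'cV[C]_d, (0 : C) <= ((adj v) *m A *m v) 0 0.

Definition density (d : nat) (rho : 'M[C]_d) : Prop :=
  hermitian rho /\ psd rho /\ \tr rho = 1.

Definition NQPR (d : nat) (Q : 'I_(d ^ 2) -> 'M[C]_d) : Prop :=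
  (forall j, hermitian (Q j)) /\
  (forall j, \tr (Q j) = 1) /\
  (forall j k, \tr (Q j *m Q k) = (d%:R * (j == k)%:R)).

(* negativity: max{0, - min_j tr(rho Q_j)}; tr(rho Q_j) is real for Hermitian
   rho, Q_j, so we take its real part *)
Definition negativity (d : nat) (Q : 'I_(d ^ 2) -> 'M[C]_d) (rho : 'M[C]_d) : R :=
  \big[Num.max/0]_(j < d ^ 2) (- complex.Re (\tr (rho *m Q j))).

Definition SIC (d : nat) (P : 'I_(d ^ 2) -> 'M[C]_d) : Prop :=
  (forall j, hermitian (P j) /\ P j *m P j = P j /\ \rank (P j) = 1%N) /\
  (forall j k, \tr (P j *m P k) = (d%:R * (j == k)%:R + 1) / (d%:R + 1)).

Definition Qplus (d : nat) (P : 'I_(d ^ 2) -> 'M[C]_d) (j : 'I_(d ^ 2)) : 'M[C]_d :=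
  - ((Num.sqrt (d%:R + 1 : R))%:C *: P j)
  + ((d%:R : C)^-1 * (1 + (Num.sqrt (d%:R + 1 : R))%:C)) *: 1%:M.

Definition Nplus (d : nat) : R :=
  ((d%:R - 1) * Num.sqrt (d%:R + 1) - 1) / d%:R.

End QDefs.

From Pilot Require Import Defs.
From mathcomp Require Import all_boot all_order all_algebra.
From mathcomp Require Import reals complex spectral ring lra.
Import Order.TTheory GRing.Theory Num.Theory.
Set Implicit Arguments. Unset Strict Implicit. Unset Printing Implicit Defensive.
Local Open Scope ring_scope.
Local Open Scope complex_scope.

(* Write s = sqrt (d + 1), mu = (1 + s) / d and, for Hermitian A with tr A = 1 and
   tr A^2 = d, E_A = (mu - A) / s; thus Q_j^+ = mu - s Pi_j says exactly E_(Q_j^+) = Pi_j.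
   E_A has trace 1 and tr (E_A E_B) = (tr (A B) + 1) / (d + 1), so tr E_A^2 = 1.  For a
   density operator rho, tr rho^2 <= 1 gives
     0 <= tr (rho - E_A)^2 = tr rho^2 + 1 - 2 (mu - tr (rho A)) / s <= 2 - 2 (mu - tr (rho A)) / s,
   hence tr (rho A) >= mu - s = - N^+, with equality only at rho = E_A.  So N(rho) = N^+
   exactly when rho is one of the d^2 operators E_(Q_j), which bounds the count.  All of them
   are density operators iff, by purity tr E^2 = 1, they are rank-one projectors, and then the
   trace formula says that they form a SIC whose Q^+ is Q. *)

Section ProbabilityWeights.
Variables (T : numDomainType) (I : finType) (x : I -> T).
Hypotheses (x_ge0 : forall i, 0 <= x i) (sum_x : \sum_i x i = 1).

Lemma weight_le1 i : x i <= 1.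
Proof. by rewrite -sum_x (bigD1 i) //= lerDl sumr_ge0. Qed.

Lemma weight_sqr_le i : x i ^+ 2 <= x i.
Proof. by rewrite expr2 ler_piMr ?weight_le1. Qed.

Lemma sum_weight_sqr_le1 : \sum_i x i ^+ 2 <= 1.
Proof. by rewrite -sum_x; apply: ler_sum => i _; apply: weight_sqr_le. Qed.

Lemma sum_weight_sqr_eq1 :
  \sum_i x i ^+ 2 = 1 -> exists k, forall i, x i = (i == k)%:R.
Proof.
move=> sum_x2.
have x_idem i : x i ^+ 2 = x i.
  have /psumr_eq0P defect0 : \sum_i (x i - x i ^+ 2) = 0.
    by rewrite sumrB sum_x sum_x2 subrr.
  apply/eqP; rewrite eq_sym -subr_eq0; apply/eqP/defect0 => // j _.
  by rewrite subr_ge0 weight_sqr_le.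
have [k xk_neq0] : exists k, x k != 0.
  case: (pickP (fun k => x k != 0)) => [k ? | x0]; first by exists k.
  move: sum_x; rewrite big1 => [/eqP | i _]; first by rewrite eq_sym oner_eq0.
  exact/eqP/negbFE/x0.
have xk1 : x k = 1 by apply: (mulIf xk_neq0); rewrite mul1r -expr2 x_idem.
have rest0 : \sum_(i | i != k) x i = 0.
  by move: sum_x; rewrite (bigD1 k) //= xk1 => /(canRL (addKr 1)); rewrite addNr.
exists k => i; case: eqVneq => [-> // | ik].
by apply: (psumr_eq0P _ rest0) => // j _.
Qed.

End ProbabilityWeights.

Section Adjoint.
Variable R : realType.
Local Notation C := R[i].

Lemma adjM m n p (A : 'M[C]_(m, n)) (B : 'M[C]_(n, p)) :
  adj (A *m B) = adj B *m adj A.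
Proof. by rewrite /adj map_mxM trmx_mul. Qed.

Lemma adjK m n (A : 'M[C]_(m, n)) : adj (adj A) = A.
Proof. by apply/matrixP=> i j; rewrite !mxE conjcK. Qed.

Lemma adjB m n (A B : 'M[C]_(m, n)) : adj (A - B) = adj A - adj B.
Proof. by apply/matrixP=> i j; rewrite !mxE rmorphB. Qed.

Lemma adjZ m n a (A : 'M[C]_(m, n)) : adj (a *: A) = a^*%C *: adj A.
Proof. by apply/matrixP=> i j; rewrite !mxE rmorphM. Qed.

Lemma adj_scalar_mx n a : adj (a%:M : 'M[C]_n) = a^*%C%:M.
Proof. by apply/matrixP=> i j; rewrite !mxE rmorphMn eq_sym. Qed.

Lemma adj_delta_mx n (k : 'I_n) : adj (delta_mx k 0 : 'cV[C]_n) = delta_mx 0 k.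
Proof.
apply/matrixP=> i j; rewrite !mxE andbC.
by case: (_ && _); apply/eqP; rewrite eq_complex /= oppr0 !eqxx.
Qed.

Lemma trmxC_adj m n (A : 'M[C]_(m, n)) : map_mx Num.conj A^T = adj A.
Proof. by rewrite /adj map_trmx. Qed.

Lemma mxtrace_adj n (A : 'M[C]_n) : \tr (adj A) = (\tr A)^*%C.
Proof.
by rewrite /adj mxtrace_tr /mxtrace rmorph_sum; apply: eq_bigr => i _; rewrite mxE.
Qed.

Lemma hermitian_sub n (A B : 'M[C]_n) :
  Defs.hermitian A -> Defs.hermitian B -> Defs.hermitian (A - B).
Proof. by rewrite /Defs.hermitian adjB => -> ->. Qed.

Lemma mxtrace_hermitian_mul n (A B : 'M[C]_n) :
  Defs.hermitian A -> Defs.hermitian B -> \tr (A *m B) = (complex.Re (\tr (A *m B)))%:C.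
Proof.
move=> hA hB; have trJ : (\tr (A *m B))^*%C = \tr (A *m B).
  by rewrite -mxtrace_adj adjM hA hB mxtrace_mulC.
by rewrite ReJ_add trJ; field.
Qed.

Lemma mxtrace_mul_adj n (B : 'M[C]_n) :
  \tr (B *m adj B) = \sum_i \sum_j B i j * (B i j)^*%C.
Proof.
by apply: eq_bigr => i _; rewrite mxE; apply: eq_bigr => j _; rewrite !mxE.
Qed.

Lemma hermitian_mxtrace_sqr_ge0 n (B : 'M[C]_n) :
  Defs.hermitian B -> 0 <= \tr (B *m B).
Proof.
move=> hB; rewrite -{2}hB mxtrace_mul_adj.
by apply: sumr_ge0 => i _; apply: sumr_ge0 => j _; apply: mulcJ_ge0.
Qed.

Lemma hermitian_mxtrace_sqr_eq0 n (B : 'M[C]_n) :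
  Defs.hermitian B -> \tr (B *m B) = 0 -> B = 0.
Proof.
move=> hB; rewrite -{2}hB mxtrace_mul_adj => /psumr_eq0P row0.
apply/matrixP => i j; rewrite mxE.
have /psumr_eq0P entry0 : \sum_j B i j * (B i j)^*%C = 0.
  by apply: row0 => // k _; apply: sumr_ge0 => l _; apply: mulcJ_ge0.
have /eqP := entry0 (fun l _ => mulcJ_ge0 (B i l)) j isT.
by rewrite mulf_eq0 conjc_eq0 orbb => /eqP.
Qed.

End Adjoint.

Section Conjugation.
Variables (F : fieldType) (n : nat) (U : 'M[F]_n).
Hypothesis U_unit : U \in unitmx.

Lemma mulmx_conj (D E : 'M[F]_n) :
  invmx U *m D *m U *m (invmx U *m E *m U) = invmx U *m (D *m E) *m U.
Proof. by rewrite !mulmxA mulmxK // -[invmx U *m D *m E]mulmxA. Qed.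

Lemma mxtrace_conj (D : 'M[F]_n) : \tr (invmx U *m D *m U) = \tr D.
Proof. by rewrite mxtrace_mulC mulmxA mulmxV // mul1mx. Qed.

Lemma mxrank_conj (D : 'M[F]_n) : \rank (invmx U *m D *m U) = \rank D.
Proof.
rewrite mxrankMfree ?row_free_unit // -mxrank_tr trmx_mul.
by rewrite mxrankMfree ?mxrank_tr // row_free_unit unitmx_tr unitmx_inv.
Qed.

Lemma mxtrace_sqr_conj_diag (x : 'rV[F]_n) :
  let A := invmx U *m diag_mx x *m U in \tr (A *m A) = \sum_k x 0 k ^+ 2.
Proof.
rewrite /= mulmx_conj mxtrace_conj mulmx_diag mxtrace_diag.
by apply: eq_bigr => k _; rewrite mxE expr2.
Qed.

End Conjugation.

Section Density.
Variables (R : realType) (n : nat).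
Local Notation C := R[i].
Implicit Types rho : 'M[C]_n.

Lemma psd_projector (P : 'M[C]_n) : Defs.hermitian P -> P *m P = P -> psd P.
Proof.
move=> hP PP v.
have -> : adj v *m P *m v = adj (P *m v) *m (P *m v).
  by rewrite adjM hP !mulmxA -[adj v *m P *m P]mulmxA PP.
by rewrite mxE; apply: sumr_ge0 => i _; rewrite !mxE mulrC mulcJ_ge0.
Qed.

Lemma density_spectral rho : density rho ->
  exists U (x : 'rV[C]_n), [/\ U \in unitmx, rho = invmx U *m diag_mx x *m U,
    forall k, 0 <= x 0 k & \sum_k x 0 k = 1].
Proof.
move=> [h_rho [psd_rho tr_rho]].
set U := spectralmx rho; set x := spectral_diag rho.
have U_unit : U \in unitmx := spectral_unit rho.
have rhoE : rho = invmx U *m diag_mx x *m U.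
  by apply/orthomx_spectralP/normalmxP; rewrite trmxC_adj h_rho.
have U_adj : adj U = invmx U.
  by rewrite invmx_unitary ?spectral_unitarymx // trmxC_adj.
exists U, x; split=> // [k|]; last by rewrite -mxtrace_diag -(mxtrace_conj U_unit) -rhoE.
have := psd_rho (adj U *m delta_mx k 0).
rewrite adjM adjK adj_delta_mx U_adj rhoE !mulmxA !mulmxK //.
by rewrite -rowE -colE !mxE eqxx mulr1n.
Qed.

Lemma density_mxtrace_sqr_le1 rho : density rho -> \tr (rho *m rho) <= 1.
Proof.
move=> /density_spectral [U [x [U_unit -> x_ge0 sum_x]]].
by rewrite mxtrace_sqr_conj_diag // sum_weight_sqr_le1.
Qed.

Lemma density_pure rho : density rho -> \tr (rho *m rho) = 1 ->
  rho *m rho = rho /\ \rank rho = 1%N.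
Proof.
move=> /density_spectral [U [x [U_unit -> x_ge0 sum_x]]].
rewrite mxtrace_sqr_conj_diag // => /(sum_weight_sqr_eq1 x_ge0 sum_x) [k xE].
have -> : diag_mx x = delta_mx k k.
  apply/matrixP => i j; rewrite !mxE xE.
  case: (eqVneq i k) => [-> | _]; last by rewrite mul0rn.
  by case: (eqVneq j k); rewrite /= ?mulr1n ?mulr0n.
by rewrite mulmx_conj // mul_delta_mx mxrank_conj // mxrank_delta.
Qed.

End Density.

Section Extremal.
Variables (R : realType) (d : nat).
Local Notation C := R[i].

Definition sqrtd1 : R := Num.sqrt (d%:R + 1).
Definition mu : R := (1 + sqrtd1) / d%:R.

Definition extremal (A : 'M[C]_d) : 'M[C]_d :=
  (sqrtd1^-1)%:C *: (mu%:C%:M - A).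

Lemma sqrtd1_gt0 : 0 < sqrtd1.
Proof. by rewrite sqrtr_gt0 ltr_wpDl. Qed.

Lemma sqrtd1_sqr : sqrtd1 ^+ 2 = d%:R + 1.
Proof. by rewrite sqr_sqrtr // addr_ge0. Qed.

Hypothesis d_gt0 : (0 < d)%N.

Let d_neq0 : (d%:R : R) != 0.
Proof. by rewrite pnatr_eq0 -lt0n. Qed.

Lemma sqrtd1_gt1 : 1 < sqrtd1.
Proof.
have d_ge1 : (1 : R) <= d%:R by rewrite (ler_nat R 1 d).
by have := sqrtd1_sqr; have := sqrtd1_gt0; nra.
Qed.

Lemma muE : mu = (sqrtd1 - 1)^-1.
Proof.
have s_gt1 := sqrtd1_gt1.
rewrite /mu -[d%:R](addrK 1) -sqrtd1_sqr; field.
by rewrite sqrtd1_sqr addrK d_neq0 andbT subr_eq0 gt_eqF.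
Qed.

Lemma NplusE : Nplus R d = sqrtd1 - mu.
Proof. by rewrite /Nplus -/sqrtd1 /mu; field. Qed.

Lemma hermitian_extremal A : Defs.hermitian A -> Defs.hermitian (extremal A).
Proof. by move=> hA; rewrite /Defs.hermitian adjZ adjB adj_scalar_mx hA !conjc_real. Qed.

Lemma extremalK (P : 'M[C]_d) : extremal (mu%:C%:M - sqrtd1%:C *: P) = P.
Proof.
rewrite /extremal opprB addrC subrK scalerA -rmorphM mulVf ?scale1r //.
by rewrite gt_eqF ?sqrtd1_gt0.
Qed.

Lemma extremalKV A : mu%:C%:M - sqrtd1%:C *: extremal A = A.
Proof.
rewrite /extremal scalerA -rmorphM mulfV ?gt_eqF ?sqrtd1_gt0 //.
by rewrite scale1r opprB addrC subrK.
Qed.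

Lemma mxtrace_mul_extremal (rho A : 'M[C]_d) : \tr rho = 1 ->
  \tr (rho *m extremal A) = (sqrtd1^-1)%:C * (mu%:C - \tr (rho *m A)).
Proof.
move=> tr_rho; rewrite /extremal -scalemxAr mxtraceZ mulmxBr mul_mx_scalar.
by rewrite raddfB /= mxtraceZ tr_rho mulr1.
Qed.

Lemma mxtrace_extremal A : \tr A = 1 -> \tr (extremal A) = 1.
Proof.
move=> trA; rewrite /extremal mxtraceZ raddfB /= mxtrace_scalar trA.
rewrite -mulr_natr -(rmorph_nat (real_complex R)) -rmorphM /mu mulfVK // rmorphD rmorph1.
rewrite [1 + _]addrC addrK -rmorphM mulVf //.
by rewrite gt_eqF ?sqrtd1_gt0.
Qed.

Lemma mxtrace_extremal_mul A B : \tr A = 1 -> \tr B = 1 ->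
  \tr (extremal A *m extremal B) = (\tr (A *m B) + 1) / (d%:R + 1).
Proof.
move=> trA trB; rewrite mxtrace_mul_extremal ?mxtrace_extremal //.
rewrite mxtrace_mulC mxtrace_mul_extremal // mxtrace_mulC.
have s_neq0 : sqrtd1%:C != 0 by rewrite fmorph_eq0 gt_eqF ?sqrtd1_gt0.
have s1_neq0 : sqrtd1%:C - 1 != 0.
  by rewrite -(rmorph1 (real_complex R)) -rmorphB fmorph_eq0 subr_eq0 gt_eqF ?sqrtd1_gt1.
rewrite muE !fmorphV rmorphB rmorph1.
have -> : (d%:R + 1 : C) = sqrtd1%:C ^+ 2.
  by rewrite -rmorphXn sqrtd1_sqr rmorphD rmorph1 rmorph_nat.
by field; apply/andP.
Qed.

Lemma QplusE (P : 'I_(d ^ 2) -> 'M[C]_d) j :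
  Qplus P j = mu%:C%:M - sqrtd1%:C *: P j.
Proof.
rewrite /Qplus -/sqrtd1 scalemx1 addrC /mu; congr (_%:M - _).
by rewrite rmorphM rmorphD rmorph1 fmorphV rmorph_nat mulrC.
Qed.

Let dim1_neq0 : (d%:R + 1 : C) != 0.
Proof. by rewrite natr1 pnatr_eq0. Qed.

Lemma extremal_bound A rho :
  Defs.hermitian A -> \tr A = 1 -> \tr (A *m A) = d%:R -> density rho ->
  mu - sqrtd1 <= complex.Re (\tr (rho *m A)) /\
  (complex.Re (\tr (rho *m A)) = mu - sqrtd1 -> rho = extremal A).
Proof.
move=> hA trA trAA rho_dens; have [h_rho [_ tr_rho]] := rho_dens.
set t := complex.Re _; set q := complex.Re (\tr (rho *m rho)); set w := sqrtd1^-1.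
have tE : \tr (rho *m A) = t%:C := mxtrace_hermitian_mul h_rho hA.
have qE : \tr (rho *m rho) = q%:C := mxtrace_hermitian_mul h_rho h_rho.
have q_le1 : q <= 1 by rewrite -lecR -qE; exact: density_mxtrace_sqr_le1.
set B := rho - extremal A.
have hB : Defs.hermitian B := hermitian_sub h_rho (hermitian_extremal hA).
have trBB : \tr (B *m B) = (q + 1 - 2 * w * (mu - t))%:C.
  rewrite /B mulmxBl !mulmxBr !raddfB /= [\tr (extremal A *m rho)]mxtrace_mulC.
  rewrite mxtrace_mul_extremal // mxtrace_extremal_mul // trAA qE tE divff //.
  rewrite !(rmorphB, rmorphD, rmorphM, rmorph1, rmorph_nat); ring.
have B_ge0 : 0 <= q + 1 - 2 * w * (mu - t).
  by rewrite -lecR -trBB; exact: hermitian_mxtrace_sqr_ge0.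
have ws : w * sqrtd1 = 1 by rewrite mulVf // gt_eqF ?sqrtd1_gt0.
have s_gt0 := sqrtd1_gt0.
split; first by nra.
move=> t_eq; have wt1 : w * (mu - t) = 1 by rewrite t_eq opprB addrC subrK.
rewrite -mulrA wt1 in trBB B_ge0.
have : \tr (B *m B) = 0 by rewrite trBB; congr (_%:C); lra.
by move/(hermitian_mxtrace_sqr_eq0 hB)/eqP; rewrite subr_eq0 => /eqP.
Qed.

Lemma extremal_bound_attained A : \tr A = 1 -> \tr (A *m A) = d%:R ->
  complex.Re (\tr (extremal A *m A)) = mu - sqrtd1.
Proof.
move=> trA trAA; rewrite mxtrace_mulC mxtrace_mul_extremal // trAA.
rewrite -(rmorph_nat (real_complex R)) -rmorphB -rmorphM /=.
have s_gt1 := sqrtd1_gt1.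
rewrite muE -[d%:R](addrK 1) -sqrtd1_sqr; field.
by rewrite subr_eq0 gt_eqF // gt_eqF // (lt_trans _ s_gt1).
Qed.


End Extremal.

Lemma Nplus_gt0 (R : realType) d : (2 <= d)%N -> 0 < Nplus R d.
Proof.
move=> d_ge2; have d_ge2R : (2 : R) <= d%:R by rewrite (ler_nat R 2 d).
have s_gt1 := sqrtd1_gt1 R (ltnW d_ge2).
by rewrite /Nplus divr_gt0 ?ltr0n ?(leq_trans _ d_ge2) // subr_gt0 -/(sqrtd1 R d); nra.
Qed.

Section SICs.
Variables (R : realType) (d : nat) (P : 'I_(d ^ 2) -> 'M[R[i]]_d).
Hypothesis P_SIC : SIC P.

Lemma SIC_density j : density (P j).
Proof.
have [[hP [PP _]] trPP] := (P_SIC.1 j, P_SIC.2).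
split; [done | split; first exact: psd_projector].
by rewrite -PP trPP eqxx mulr1 divff // natr1 pnatr_eq0.
Qed.

Lemma SIC_injective : (0 < d)%N -> injective P.
Proof.
move=> d_gt0 j k Pjk; apply/eqP; apply: contraTT isT => jk.
have dim1_neq0 : (d%:R + 1 : R[i]) != 0 by rewrite natr1 pnatr_eq0.
have := P_SIC.2 j k; rewrite -Pjk P_SIC.2 eqxx (negPf jk) mulr1 mulr0 add0r divff // mul1r.
move/esym/eqP; rewrite invr_eq1 -subr_eq0 addrK pnatr_eq0 => /eqP d0.
by rewrite d0 in d_gt0.
Qed.

End SICs.

Section Negativity.
Variables (R : realType) (d : nat) (Q : 'I_(d ^ 2) -> 'M[R[i]]_d).
Hypotheses (d_ge2 : (2 <= d)%N) (Q_NQPR : NQPR Q).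

Let d_gt0 : (0 < d)%N. Proof. exact: ltnW. Qed.
Let Q_herm j : Defs.hermitian (Q j). Proof. exact: Q_NQPR.1. Qed.
Let Q_tr j : \tr (Q j) = 1. Proof. exact: Q_NQPR.2.1. Qed.
Let Q_tr_mul j k : \tr (Q j *m Q k) = d%:R * (j == k)%:R. Proof. exact: Q_NQPR.2.2. Qed.
Let Q_tr_sqr j : \tr (Q j *m Q j) = d%:R. Proof. by rewrite Q_tr_mul eqxx mulr1. Qed.

Lemma negativity_eq_Nplus rho : density rho ->
  negativity Q rho = Nplus R d <-> exists j, rho = extremal (Q j).
Proof.
move=> rho_dens.
have bound j := extremal_bound d_gt0 (Q_herm j) (Q_tr j) (Q_tr_sqr j) rho_dens.
have le_Nplus j : - complex.Re (\tr (rho *m Q j)) <= Nplus R d.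
  by have [t_ge _] := bound j; rewrite NplusE //; lra.
have Nplus_gt0 := Nplus_gt0 R d_ge2.
split=> [N_eq | [j rhoE]]; last first.
  apply/eqP; rewrite eq_le; apply/andP; split.
    by apply: bigmax_le => [|i _]; [exact: ltW | exact: le_Nplus].
  apply: le_trans (le_bigmax _ _ j).
  by rewrite rhoE extremal_bound_attained // NplusE // opprB.
have [j /eqP t_eq | t_neq] :=
  pickP (fun j => complex.Re (\tr (rho *m Q j)) == mu R d - sqrtd1 R d).
  by exists j; apply: (bound j).2.
suff : negativity Q rho < Nplus R d by rewrite N_eq ltxx.
apply: bigmax_lt => // j _; rewrite lt_neqAle le_Nplus andbT NplusE //.
by apply: contraFN (t_neq j) => /eqP t_eq; apply/eqP; lra.
Qed.

Lemma Nplus_states_sub (s : seq 'M[R[i]]_d) :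
  (forall rho, rho \in s -> density rho /\ negativity Q rho = Nplus R d) ->
  {subset s <= codom (fun j => extremal (Q j))}.
Proof.
move=> s_N rho /s_N [rho_dens /(negativity_eq_Nplus rho_dens) [j ->]].
exact: codom_f.
Qed.

Lemma extremal_SIC : (forall j, density (extremal (Q j))) ->
  SIC (fun j => extremal (Q j)) /\ forall j, Q j = Qplus (fun j => extremal (Q j)) j.
Proof.
move=> E_dens.
have E_tr_mul j k : \tr (extremal (Q j) *m extremal (Q k))
    = (d%:R * (j == k)%:R + 1) / (d%:R + 1).
  by rewrite mxtrace_extremal_mul // Q_tr_mul.
split; last by move=> j; rewrite QplusE extremalKV.
split=> // j; have [E_herm _] := E_dens j.
by split=> //; apply: density_pure; rewrite // E_tr_mul eqxx mulr1 divff // natr1 pnatr_eq0.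
Qed.

End Negativity.

Theorem theorem2 (R : realType) (d : nat) (Q : 'I_(d ^ 2) -> 'M[R[i]]_d) :
  (2 <= d)%N -> NQPR Q ->
  (* the number of density operators rho with N(rho) = N^+ is at most d^2 *)
  (forall s : seq 'M[R[i]]_d, uniq s ->
     (forall rho, rho \in s -> density rho /\ negativity Q rho = Nplus R d) ->
     (size s <= d ^ 2)%N) /\
  (* it equals d^2 iff Q is the Q^+ of some SIC *)
  ((exists s : seq 'M[R[i]]_d, uniq s /\ size s = (d ^ 2)%N /\
      (forall rho, (density rho /\ negativity Q rho = Nplus R d) <-> rho \in s))
   <->
   (exists P : 'I_(d ^ 2) -> 'M[R[i]]_d, SIC P /\ forall j, Q j = Qplus P j)).
Proof.
move=> d_ge2 Q_NQPR; have d_gt0 : (0 < d)%N := ltnW d_ge2.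
set E := fun j => extremal (Q j).
have size_E : size (codom E) = (d ^ 2)%N by rewrite size_codom card_ord.
split=> [s s_uniq s_N | ].
  by rewrite -size_E; apply: uniq_leq_size (Nplus_states_sub d_ge2 Q_NQPR s_N).
split=> [[s [s_uniq [s_size s_N]]] | [P [P_SIC QE]]].
  have s_sub := Nplus_states_sub d_ge2 Q_NQPR (fun rho => (s_N rho).2).
  have [_ s_E] := uniq_min_size s_uniq s_sub (eq_leq (etrans size_E (esym s_size))).
  exists E; apply: extremal_SIC => // j.
  by have /s_N [] : E j \in s by rewrite s_E codom_f.
have EP j : E j = P j by rewrite /E QE QplusE extremalK.
exists (codom P); split.
  by rewrite codomE map_inj_uniq ?enum_uniq //; apply: SIC_injective.
split=> [| rho]; first by rewrite size_codom card_ord.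
split=> [[rho_dens /(negativity_eq_Nplus d_ge2 Q_NQPR rho_dens) [j ->]] | /codomP [j ->]].
  by rewrite -/(E j) EP codom_f.
have P_dens := SIC_density P_SIC j.
by split=> //; apply/(negativity_eq_Nplus d_ge2 Q_NQPR P_dens); exists j; rewrite -EP.
Qed.
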